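(* Consider a system in which all tasks have the same period, $\tau_X=\tau$ for all $X\in S$. If the system is strictly feasible, then it is fulfilled by the Greedy Maximizer policy.
   Context: A system consists of a finite set $S$ of tasks. Time is slotted, $t\in\{0,1,2,\dots\}$. Each task $X\in S$ has a period $\tau_X$ (a positive integer); time is partitioned into consecutive periods of $X$ of $\tau_X$ slots each, the first starting at $t=0$, and in each period $X$ has one job, removed at the end of the period. Let $T=\mathrm{lcm}\{\tau_X : X\in S\}$; time is partitioned into consecutive frames of $T$ slots each, the $k$-th frame ($k=1,2,\dots$) being the $k$-th such block starting from $t=0$. A scheduling policy chooses in each slot either to idle or to execute the job of exactly one task. Each task $X$ has rewards $r^1_X\ge r^2_X\ge\dots\ge r^{\tau_X}_X\ge 0$: executing the job of $X$ for the $i$-th time within a period yields reward $r^i_X$ to $X$. Let $s_X(t)$ be the total reward obtained by $X$ between time 0 and $t$; the average reward is $q_X=\liminf_{t\to\infty}s_X(t)/(t/T)$. Each task has a minimum requirement $q^*_X>0$; a policy fulfills the system if $q_X\ge q^*_X$ with probability 1 for all $X\in S$. The system is feasible if some policy fulfills it, and strictly feasible if there is $\epsilon>0$ such that the same system with requirements $[(1+\epsilon)q^*_X]$ is feasible. Let $\tilde q_X(k)$ be the total reward obtained by $X$ during the $k$-th frame. The debt of $X$ is $d_X(0)=0$, $d_X(k)=[d_X(k-1)+q^*_X-\tilde q_X(k)]^+$ for $k>0$, with $[x]^+=\max\{x,0\}$. The Greedy Maximizer policy is the following: at the start of each frame the debts are updated by the recursion above (initially all debts are $0$); during the frame, in each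 time slot, letting $i_X$ denote the number of times the job of $X$ has already been executed in its current period (reset to $0$ at the start of each period of $X$), the policy executes the job of a task $Y\in S$ maximizing $r^{i_Y+1}_Y\,d_Y$ over $X\in S$ (using the current debts $d_X$), with ties broken arbitrarily. *)

From HB Require Import structures.
From mathcomp Require Import all_boot all_order all_algebra.
From mathcomp Require Import all_classical all_reals all_analysis.
Set Implicit Arguments. Unset Strict Implicit. Unset Printing Implicit Defensive.
Import Order.TTheory GRing.Theory Num.Theory.
Local Open Scope ring_scope.

Section Scheduling.
Variables (R : realType) (S : finType).
Variable tau : S -> nat.
(* rewards: r X i is r^i_X, meaningful for 1 <= i <= tau X *)
Variable r : S -> nat -> R.

Definition frameT : nat := \big[lcmn/1%N]_(X : S) tau X.

(* A (deterministic) schedule: in slot t, idle (None) or execute the job of X (Some X). *)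
Definition schedule := nat -> option S.

(* i_X(t): number of times the job of X has been executed in its current
   period before slot t (periods of X are [m*tau X, (m+1)*tau X)). *)
Definition nexec (sched : schedule) (X : S) (t : nat) : nat :=
  (\sum_((t %/ tau X) * tau X <= u < t) (sched u == Some X))%N.

Definition slot_reward (sched : schedule) (X : S) (t : nat) : R :=
  if sched t == Some X then r X (nexec sched X t).+1 else 0.

Definition cum_reward (sched : schedule) (X : S) (t : nat) : R :=
  \sum_(u < t) slot_reward sched X u.

Definition avg_reward (sched : schedule) (X : S) : \bar R :=
  limn_einf (fun t : nat => (cum_reward sched X t / (t%:R / frameT%:R))%:E).

Definition fulfills (q : S -> R) (sched : schedule) : Prop :=
  forall X : S, ((q X)%:E <= avg_reward sched X)%E.

Definition feasible (q : S -> R) : Prop := exists sched : schedule, fulfills q sched.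

Definition strictly_feasible (q : S -> R) : Prop :=
  exists eps : R, 0 < eps /\ feasible (fun X => (1 + eps) * q X).

(* tilde q_X(k): reward of X during the k-th frame (k >= 1), slots [(k-1)T, kT) *)
Definition frame_reward (sched : schedule) (X : S) (k : nat) : R :=
  \sum_(k.-1 * frameT <= u < k * frameT) slot_reward sched X u.

Fixpoint debt (q : S -> R) (sched : schedule) (X : S) (k : nat) : R :=
  match k with
  | 0 => 0
  | k'.+1 => Num.max (debt q sched X k' + q X - frame_reward sched X k'.+1) 0
  end.

(* sched is a run of the Greedy Maximizer policy (with some tie-breaking):
   in slot t, which lies in frame k = t %/ T + 1, the debts are d_X(k-1), and
   the executed task Y maximizes r^{i_Y+1}_Y d_Y. *)
Definition greedy_maximizer (q : S -> R) (sched : schedule) : Prop :=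
  forall t : nat, exists Y : S, sched t = Some Y /\
    forall X : S,
      r X (nexec sched X t).+1 * debt q sched X (t %/ frameT)
      <= r Y (nexec sched Y t).+1 * debt q sched Y (t %/ frameT).

End Scheduling.

From HB Require Import structures.
From mathcomp Require Import all_boot all_order all_algebra.
From mathcomp Require Import all_classical all_reals all_analysis.
From mathcomp Require Import zify ring lra.
Set Implicit Arguments. Unset Strict Implicit. Unset Printing Implicit Defensive.
Import Order.TTheory GRing.Theory Num.Theory.
Local Open Scope ring_scope.

(* Within one frame the Greedy Maximizer maximises the debt-weighted reward
   [sum_X d_X * (reward of X in the frame)] over all schedules: since the
   rewards of each task are nonincreasing, this is a separable concave
   objective, for which greedy choices are optimal.  Averaging a schedule that
   fulfils [(1 + eps) q] over many frames shows that frames can deliver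
   [(1 + eps/2) q_X] to every task, so the greedy weighted reward is at least
   [(1 + eps/2) sum_X d_X q_X].  This negative drift keeps the Lyapunov function
   [sum_X d_X^2], hence the debts, bounded; bounded debts mean that every task
   collects [k q_X - O(1)] reward in [k] frames. *)

Section Liminf.
Variable R : realType.
Local Open Scope ereal_scope.

Lemma limn_einfE (u : (\bar R)^nat) : limn_einf u = ereal_sup (range (einfs u)).
Proof. by rewrite limn_einf_lim; apply/cvg_lim => //; exact: cvg_einfs_sup. Qed.

Lemma lt_limn_einf_eventually (u : (\bar R)^nat) (a : \bar R) :
  a < limn_einf u -> exists N, forall n, (N <= n)%N -> a <= u n.
Proof.
rewrite limn_einfE => /ereal_sup_gt[_ [m _ <-]] am; exists m => n mn.
by apply/ltW/(lt_le_trans am)/ereal_inf_lbound; exists n.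
Qed.

Lemma limn_einf_ge_eventually (u : (\bar R)^nat) (a : R) :
  (forall e : R, (0 < e)%R -> exists N, forall n, (N <= n)%N -> (a - e)%:E <= u n) ->
  a%:E <= limn_einf u.
Proof.
move=> ev; rewrite limn_einfE; apply/lee_addgt0Pr => e e0.
have [N HN] := ev e e0.
apply: (@le_trans _ _ (einfs u N + e%:E)); last first.
  by rewrite leeD2r //; apply: ereal_sup_ubound; exists N.
by rewrite -leeBlDr //; apply: le_ereal_inf_tmp => _ [n /= Nn <-]; exact: HN.
Qed.

Lemma limn_einf_block_average_ge (f : nat -> R) (T : nat) (a M : R) :
  (0 < T)%N -> (0 <= a)%R -> {homo f : m n / (m <= n)%N >-> (m <= n)%R} ->
  (forall k, k%:R * a - M <= f (k * T)%N)%R ->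
  a%:E <= limn_einf (fun t => (f t / (t%:R / T%:R))%:E).
Proof.
move=> T0 a0 f_homo f_ge; apply: limn_einf_ge_eventually => e e0.
pose k0 := Num.truncn ((a + M) / e).
exists (k0.+1 * T)%N => t k0t; rewrite lee_fin.
pose k := (t %/ T)%N.
have k0k : (k0.+1 <= k)%N by rewrite /k -(mulnK k0.+1 T0) leq_div2r.
have kTt : (k * T <= t)%N by apply: leq_divM.
have tkT : (t < k.+1 * T)%N.
  by rewrite /k mulSn addnC {1}(divn_eq t T) ltn_add2l ltn_pmod.
have T0R : (0 < T%:R :> R)%R by rewrite ltr0n.
set x := (t%:R / T%:R)%R.
have kx : (k%:R <= x)%R by rewrite /x ler_pdivlMr // -natrM ler_nat.
have xk : (x <= k%:R + 1)%R by rewrite /x ler_pdivrMr // natr1 -natrM ler_nat ltnW.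
have k1 : (1 <= k%:R :> R)%R by rewrite ler1n; lia.
have aMk : (a + M < e * k%:R)%R.
  rewrite mulrC -ltr_pdivrMr //; apply: lt_le_trans (truncnS_gt _) _.
  by rewrite ler_nat.
rewrite ler_pdivlMr; last lra.
apply: le_trans (f_homo _ _ kTt); apply: le_trans (f_ge k).
have : (0 <= a * (k%:R + 1 - x))%R by rewrite mulr_ge0 // subr_ge0.
have : (0 <= e * (x - k%:R))%R by rewrite mulr_ge0 ?subr_ge0 // ltW.
lra.
Qed.

End Liminf.

Section DebtBound.
Variables (R : realFieldType) (S : finType).
Variables (q vmax : S -> R) (v d : nat -> S -> R) (delta : R).
Hypothesis q_gt0 : forall X, 0 < q X.
Hypothesis delta_gt0 : 0 < delta.
Hypothesis v_ge0 : forall k X, 0 <= v k X.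
Hypothesis v_le : forall k X, v k X <= vmax X.
Hypothesis d0 : forall X, d 0 X = 0.
Hypothesis dS : forall k X, d k.+1 X = Num.max (d k X + q X - v k X) 0.
Hypothesis drift :
  forall k, (1 + delta) * \sum_X d k X * q X <= \sum_X d k X * v k X.

Lemma debt_telescope k X : k%:R * q X <= \sum_(i < k) v i X + d k X.
Proof.
elim: k => [|k IH]; first by rewrite big_ord0 d0 mul0r addr0.
rewrite big_ord_recr /= dS -natr1 mulrDl mul1r.
have := le_max (d k X + q X - v k X) (d k X + q X - v k X) 0.
rewrite lexx /=; lra.
Qed.

Lemma d_ge0 k X : 0 <= d k X.
Proof. by case: k => [|k]; rewrite ?d0 // dS le_max lexx orbT. Qed.

Let lyapunov k := \sum_X d k X ^+ 2.
Let C := \sum_X (q X + vmax X) ^+ 2.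

Lemma weighted_debt_ge0 k : 0 <= \sum_X d k X * q X.
Proof. by apply: sumr_ge0 => X _; rewrite mulr_ge0 ?d_ge0 // ltW. Qed.

Lemma lyapunov_step k :
  lyapunov k.+1 <= lyapunov k + C - 2 * delta * \sum_X d k X * q X.
Proof.
have := drift k; have := weighted_debt_ge0 k.
have step : lyapunov k.+1 <= \sum_X (d k X ^+ 2 + (q X + vmax X) ^+ 2
                         + 2 * (d k X * q X) - 2 * (d k X * v k X)).
  apply: ler_sum => X _; rewrite dS.
  have := v_le k X; have := v_ge0 k X; have := q_gt0 X; have := d_ge0 k X.
  set x := d k X; set y := v k X; set z := q X; set w := vmax X => x0 z0 y0 yw.
  apply: (@le_trans _ _ ((x + z - y) ^+ 2)).
    by rewrite maxEle; case: ifP => // _; rewrite expr0n /= sqr_ge0.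
  rewrite !expr2; nra.
move: step; rewrite sumrB !big_split /= -!mulr_sumr -/(lyapunov k) -/C; nra.
Qed.

Let B := \sum_X (C / (2 * delta * q X)) ^+ 2.

(* Either [lyapunov] decreases, or [2 delta d_X q_X <= C] bounds every debt [d_X]. *)
Lemma lyapunov_bounded k : lyapunov k <= B + C.
Proof.
have B0 : 0 <= B by apply: sumr_ge0 => X _; exact: sqr_ge0.
have C0 : 0 <= C by apply: sumr_ge0 => X _; exact: sqr_ge0.
elim: k => [|k IH].
  by rewrite /lyapunov big1 ?addr_ge0 // => X _; rewrite d0 expr0n.
have := lyapunov_step k; have := weighted_debt_ge0 k.
set A := \sum_X d k X * q X => A0.
have [|CA] := lerP C (2 * delta * A); first lra.
have : 0 <= 2 * delta * A by rewrite !mulr_ge0 // ltW.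
suff : lyapunov k <= B by lra.
apply: ler_sum => X _; have qX := q_gt0 X; have dX := d_ge0 k X.
have dqA : d k X * q X <= A.
  rewrite /A (bigD1 X) //= lerDl; apply: sumr_ge0 => Y _.
  by rewrite mulr_ge0 ?d_ge0 // ltW.
have dC : d k X <= C / (2 * delta * q X).
  rewrite ler_pdivlMr; last by rewrite !mulr_gt0.
  apply: le_trans (ltW CA); rewrite mulrCA.
  by rewrite ler_wpM2l ?mulr_ge0 // ltW.
by apply: lerXn2r; rewrite ?nnegrE // (le_trans dX).
Qed.

Lemma debt_bounded : exists M, forall k X, d k X <= M.
Proof.
exists (1 + (B + C)) => k X.
have : d k X ^+ 2 <= B + C.
  apply: le_trans (lyapunov_bounded k); rewrite /lyapunov (bigD1 X) //= lerDl.
  by apply: sumr_ge0 => Y _; exact: sqr_ge0.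
have := d_ge0 k X; rewrite expr2; nra.
Qed.

End DebtBound.

Section CommonPeriod.
Variables (R : realType) (S : finType) (tau : S -> nat) (r : S -> nat -> R).
Variable tau0 : nat.
Hypothesis tau0_gt0 : (0 < tau0)%N.
Hypothesis tauE : forall X, tau X = tau0.
Hypothesis r_nonincr : forall X i, (1 <= i)%N -> (i < tau0)%N -> r X i.+1 <= r X i.
Hypothesis r_ge0 : forall X i, (1 <= i <= tau0)%N -> 0 <= r X i.

Definition execs (sc : schedule S) (X : S) (a n : nat) : nat :=
  (\sum_(a <= u < a + n) (sc u == Some X))%N.

Definition gain (X : S) (c : nat) : R := \sum_(i < c) r X i.+1.

Definition weighted_gain (d : S -> R) (c : S -> nat) : R :=
  \sum_X d X * gain X (c X).

Lemma execsS sc X a n :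
  execs sc X a n.+1 = (execs sc X a n + (sc (a + n) == Some X))%N.
Proof. by rewrite /execs addnS big_nat_recr //= leq_addr. Qed.

Lemma execs0 sc X a : execs sc X a 0 = 0%N.
Proof. by rewrite /execs addn0 big_geq. Qed.

Lemma execs_le sc X a n : (execs sc X a n <= n)%N.
Proof. by elim: n => [|n IH]; rewrite ?execs0 // execsS; case: (_ == _) => /=; lia. Qed.

Lemma sum_execs_le sc a n : (\sum_X execs sc X a n <= n)%N.
Proof.
elim: n => [|n IH]; first by rewrite big1 // => X _; rewrite execs0.
under eq_bigr do rewrite execsS.
rewrite big_split /=; suff : (\sum_X (sc (a + n) == Some X) <= 1)%N by lia.
case: (sc (a + n)) => [Y|]; last by rewrite big1.
rewrite (bigD1 Y) //= eqxx big1 // => X XY.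
by rewrite (inj_eq Some_inj) eq_sym (negbTE XY).
Qed.

Lemma gainS X c : gain X c.+1 = gain X c + r X c.+1.
Proof. by rewrite /gain big_ord_recr. Qed.

Lemma r_nonincr_le X i k : (1 <= i <= k)%N -> (k <= tau0)%N -> r X k <= r X i.
Proof.
move=> /andP[i1]; elim: k => [|k IH] ik ktau; first lia.
case: (ltngtP i k.+1) ik => // ik _; last by rewrite ik.
by apply: le_trans (IH _ _); [apply: r_nonincr|lia|lia]; lia.
Qed.

Lemma gain_le X c c' : (c <= c')%N -> (c' <= tau0)%N -> gain X c <= gain X c'.
Proof.
move=> cc' c't; rewrite /gain -!(big_mkord xpredT (fun i => r X i.+1)).
rewrite (big_cat_nat _ cc') //= lerDl big_nat_cond.
by apply: sumr_ge0 => i /andP[/andP[_ ic'] _]; apply: r_ge0; lia.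
Qed.

Lemma gain_ge0 X c : (c <= tau0)%N -> 0 <= gain X c.
Proof. by move=> ct; have := gain_le X (leq0n c) ct; rewrite /gain big_ord0. Qed.

Lemma nexec_execs sc X m n : (n < tau0)%N ->
  nexec tau sc X (m * tau0 + n) = execs sc X (m * tau0) n.
Proof. by move=> ntau; rewrite /nexec tauE divnMDl // divn_small // addn0. Qed.

Lemma nexec_lt sc X t : (nexec tau sc X t < tau0)%N.
Proof.
rewrite [t](divn_eq t tau0) nexec_execs ?ltn_pmod //.
exact: leq_ltn_trans (execs_le _ _ _ _) (ltn_pmod _ _).
Qed.

Lemma slot_reward_ge0 sc X t : 0 <= slot_reward tau r sc X t.
Proof.
rewrite /slot_reward; case: (_ == _) => //; apply: r_ge0.
by have := nexec_lt sc X t; lia.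
Qed.

Lemma cum_reward_homo sc X :
  {homo cum_reward tau r sc X : t t' / (t <= t')%N >-> t <= t'}.
Proof.
move=> t t' tt'; rewrite /cum_reward -!(big_mkord xpredT) (big_cat_nat _ tt') //=.
by rewrite lerDl sumr_ge0 // => u _; exact: slot_reward_ge0.
Qed.

Lemma frameT_common (X0 : S) : frameT tau = tau0.
Proof.
rewrite /frameT (eq_bigr (fun=> tau0)) // (bigD1 X0) //=.
by apply/lcmn_idPl; elim/big_ind: _ => //= x y Hx Hy; rewrite dvdn_lcm Hx Hy.
Qed.

Lemma sum_slot_reward_period sc X m n : (n <= tau0)%N ->
  \sum_(m * tau0 <= u < m * tau0 + n) slot_reward tau r sc X u
  = gain X (execs sc X (m * tau0) n).
Proof.
elim: n => [|n IH] nt; first by rewrite addn0 big_geq // execs0 /gain big_ord0.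
rewrite addnS big_nat_recr ?leq_addr //= IH 1?ltnW //.
rewrite execsS /slot_reward nexec_execs //.
by case: (_ == _); rewrite ?addn0 ?addn1 ?gainS ?addr0.
Qed.

Lemma frame_rewardE sc X k :
  frame_reward tau r sc X k.+1 = gain X (execs sc X (k * tau0) tau0).
Proof. by rewrite /frame_reward (frameT_common X) mulSn addnC sum_slot_reward_period. Qed.

Lemma frame_reward_bounds sc X k :
  0 <= frame_reward tau r sc X k.+1 <= gain X tau0.
Proof.
by rewrite frame_rewardE gain_ge0 ?gain_le // execs_le.
Qed.

Lemma cum_reward_frames sc X k :
  cum_reward tau r sc X (k * tau0) = \sum_(j < k) frame_reward tau r sc X j.+1.
Proof.
elim: k => [|k IH]; first by rewrite /cum_reward !big_ord0.
rewrite big_ord_recr /= -IH frame_rewardE -sum_slot_reward_period //.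
rewrite /cum_reward -!(big_mkord xpredT) mulSn addnC.
by rewrite (big_cat_nat _ (leq_addr _ _)).
Qed.

Lemma weighted_gain_incr d c Y :
  weighted_gain d (fun X => c X + (X == Y))%N = weighted_gain d c + d Y * r Y (c Y).+1.
Proof.
rewrite /weighted_gain (bigD1 Y) //= [in RHS](bigD1 Y) //= eqxx addn1 gainS.
rewrite mulrDr addrAC; congr (_ + _ + _).
by apply: eq_bigr => X /negbTE ->; rewrite addn0.
Qed.

Lemma weighted_gain_le d m c : (forall X, 0 <= d X) ->
  (forall X, m X <= c X <= tau0)%N -> weighted_gain d m <= weighted_gain d c.
Proof.
move=> d_ge0 mc; apply: ler_sum => X _.
by have /andP[mcX ct] := mc X; rewrite ler_wpM2l ?gain_le.
Qed.

(* Greedy maximization of a separable concave objective: the [c]-th execution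
   of [X] in the frame is worth [d X * r X c], which is nonincreasing in [c]. *)
Lemma greedy_weighted_gain_max sc d a : (forall X, 0 <= d X) ->
  (forall j, (j < tau0)%N -> exists Y, sc (a + j) = Some Y /\
     forall X, r X (execs sc X a j).+1 * d X <= r Y (execs sc Y a j).+1 * d Y) ->
  forall j, (j <= tau0)%N -> forall m : S -> nat, (\sum_X m X <= j)%N ->
    weighted_gain d m <= weighted_gain d (fun X => execs sc X a j).
Proof.
move=> d_ge0 greedy; elim=> [|j IH] jt m sm.
  apply: weighted_gain_le => // X; rewrite execs0 leq0n andbT.
  by apply: leq_trans sm; rewrite (bigD1 X) //= leq_addr.
have [Y [scY Ymax]] := greedy j jt.
have -> : (fun X => execs sc X a j.+1) = (fun X => execs sc X a j + (X == Y))%N.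
  by apply/funext => X; rewrite execsS scY (inj_eq Some_inj) eq_sym.
rewrite weighted_gain_incr.
have gainY : 0 <= d Y * r Y (execs sc Y a j).+1.
  by rewrite mulr_ge0 // r_ge0 //; have := execs_le sc Y a j; lia.
have [Z execsZ|no_excess] := pickP (fun Z => execs sc Z a j < m Z)%N; last first.
  apply: le_trans (_ : weighted_gain d (fun X => execs sc X a j) <= _); last first.
    by rewrite lerDl.
  apply: weighted_gain_le => // X; have := no_excess X; have := execs_le sc X a j.
  by move=> /= ? /negbT; rewrite -leqNgt => ->; lia.
pose m' X := (m X - (X == Z))%N.
have mE X : m X = (m' X + (X == Z))%N by rewrite /m'; case: eqP => [->|]; lia.
have sum_mE : (\sum_X m X = \sum_X m' X + 1)%N.
  have indicator : (\sum_X (X == Z) = 1)%N.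
    by rewrite (bigD1 Z) //= eqxx big1 // => X /negbTE ->.
  by rewrite (eq_bigr _ (fun X _ => mE X)) big_split /= indicator.
have mZ : (m Z <= j.+1)%N by apply: leq_trans sm; rewrite (bigD1 Z) //= leq_addr.
rewrite (funext mE) weighted_gain_incr; apply: lerD; first by apply: IH; lia.
apply: le_trans (_ : d Z * r Z (execs sc Z a j).+1 <= _).
  have m'Z : m' Z = (m Z).-1 by rewrite /m' eqxx subn1.
  by rewrite ler_wpM2l // r_nonincr_le // m'Z; lia.
by rewrite mulrC [leRHS]mulrC Ymax.
Qed.

Lemma debt_ge0 q sc X k : 0 <= debt tau r q sc X k.
Proof. by case: k => [|k] //=; rewrite le_max lexx orbT. Qed.

Lemma greedy_frame_max q sc : greedy_maximizer tau r q sc -> forall k (m : S -> nat),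
  (\sum_X m X <= tau0)%N ->
  weighted_gain (fun X => debt tau r q sc X k) m <=
  \sum_X debt tau r q sc X k * frame_reward tau r sc X k.+1.
Proof.
move=> greedy k m sm.
under eq_bigr do rewrite frame_rewardE.
apply: (greedy_weighted_gain_max (a := k * tau0)) => //.
  by move=> X; exact: debt_ge0.
move=> j jt; have [Y [scY Ymax]] := greedy (k * tau0 + j)%N.
exists Y; split => // X; move: (Ymax X).
by rewrite (frameT_common X) divnMDl // divn_small // addn0 !nexec_execs.
Qed.

Variable q : S -> R.
Hypothesis q_gt0 : forall X, 0 < q X.

Lemma fulfills_frame_average eps sc' : 0 < eps ->
  fulfills tau r (fun X => (1 + eps) * q X) sc' ->
  exists K : nat, (0 < K)%N /\ forall X,
    K%:R * ((1 + eps / 2) * q X) <= \sum_(j < K) frame_reward tau r sc' X j.+1.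
Proof.
move=> eps_gt0 fulfilled.
have eventually X : exists N, forall t, (N <= t)%N ->
    (((1 + eps / 2) * q X)%:E <=
     (cum_reward tau r sc' X t / (t%:R / (frameT tau)%:R))%:E)%E.
  apply: lt_limn_einf_eventually; apply: lt_le_trans (fulfilled X).
  by rewrite lte_fin ltr_pM2r // ltrD2l ltr_pdivrMr // ltr_pMr // ltr1n.
have [N N_ev] := choice eventually.
exists (\max_X N X).+1; split => // X.
have := N_ev X ((\max_X N X).+1 * tau0)%N.
rewrite (frameT_common X) cum_reward_frames natrM mulfK ?pnatr_eq0 -?lt0n //.
rewrite lee_fin ler_pdivlMr ?ltr0n // mulrC; apply.
by apply: leq_trans (leq_pmulr _ tau0_gt0); apply: leq_trans (leqnSn _); exact: leq_bigmax.
Qed.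

(* Averaging the greedy frame bound over the [K] frames of a witness of strict
   feasibility. *)
Lemma greedy_drift eps sc sc' : greedy_maximizer tau r q sc -> 0 < eps ->
  fulfills tau r (fun X => (1 + eps) * q X) sc' -> forall k,
  (1 + eps / 2) * \sum_X debt tau r q sc X k * q X <=
  \sum_X debt tau r q sc X k * frame_reward tau r sc X k.+1.
Proof.
move=> greedy eps_gt0 fulfilled k.
have [K [K_gt0 KX]] := fulfills_frame_average eps_gt0 fulfilled.
set d := fun X => debt tau r q sc X k; set G := (X in _ <= X).
rewrite -(@ler_pM2l _ K%:R) ?ltr0n // mulr_sumr mulr_sumr.
apply: (@le_trans _ _ (\sum_(j < K) \sum_X d X * frame_reward tau r sc' X j.+1)).
  rewrite exchange_big /=; apply: ler_sum => X _; rewrite -mulr_sumr.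
  rewrite [leLHS](_ : _ = d X * (K%:R * ((1 + eps / 2) * q X))); last by rewrite /d; ring.
  by rewrite ler_wpM2l ?KX ?debt_ge0.
rewrite mulr_natl -[in leRHS](card_ord K) -sumr_const; apply: ler_sum => j _.
under eq_bigr do rewrite frame_rewardE.
exact: greedy_frame_max greedy k _ (sum_execs_le _ _ _).
Qed.

Lemma greedy_frames_lower_bound sc : strictly_feasible tau r q ->
  greedy_maximizer tau r q sc ->
  exists M, forall k X, k%:R * q X - M <= \sum_(j < k) frame_reward tau r sc X j.+1.
Proof.
move=> [eps [eps_gt0 [sc' fulfilled]]] greedy.
have [M debtM] : exists M, forall k X, debt tau r q sc X k <= M.
  apply: (debt_bounded (q := q) (vmax := fun X => gain X tau0)
    (v := fun k X => frame_reward tau r sc X k.+1) (delta := eps / 2)) => //.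
  - by rewrite divr_gt0.
  - by move=> k X; case/andP: (frame_reward_bounds sc X k).
  - by move=> k X; case/andP: (frame_reward_bounds sc X k).
  - exact: greedy_drift greedy eps_gt0 fulfilled.
exists M => k X; rewrite lerBlDr.
apply: le_trans (debt_telescope (d := fun k X => debt tau r q sc X k) _ _ k X) _ => //.
by rewrite lerD2l.
Qed.

End CommonPeriod.

Theorem theorem8 (R : realType) (S : finType) (tau : S -> nat)
  (r : S -> nat -> R) (qstar : S -> R) (tau0 : nat) :
  (0 < tau0)%N ->
  (forall X, tau X = tau0) ->
  (forall X i, (1 <= i)%N -> (i < tau X)%N -> r X i.+1 <= r X i) ->
  (forall X i, (1 <= i <= tau X)%N -> 0 <= r X i) ->
  (forall X, 0 < qstar X) ->
  strictly_feasible tau r qstar ->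
  forall sched : schedule S,
    greedy_maximizer tau r qstar sched ->
    fulfills tau r qstar sched.
Proof.
move=> tau0_gt0 tauE r_nonincr_tau r_ge0_tau q_gt0 feasible sched greedy X.
have r_nonincr Y i : (1 <= i)%N -> (i < tau0)%N -> r Y i.+1 <= r Y i.
  by rewrite -(tauE Y); exact: r_nonincr_tau.
have r_ge0 Y i : (1 <= i <= tau0)%N -> 0 <= r Y i.
  by rewrite -(tauE Y); exact: r_ge0_tau.
have [M frames_ge] :=
  greedy_frames_lower_bound tau0_gt0 tauE r_nonincr r_ge0 q_gt0 feasible greedy.
apply: (limn_einf_block_average_ge (M := M)).
- by rewrite (frameT_common tauE X).
- exact: ltW.
- exact: (cum_reward_homo tau0_gt0 tauE r_ge0).
- by move=> k; rewrite (frameT_common tauE X) (cum_reward_frames _ tau0_gt0 tauE).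
Qed.
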